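(* For every graph $G$ and every connected subgraph $H\subseteq G$, $$R_3(G)\geqslant (\chi(H)-1)(R_2(H)-1)+1.$$
   Context: For a graph $G$ and integer $r\geqslant 2$, the $r$-colour Ramsey number $R_r(G)$ is the smallest integer $N$ such that every colouring of the edges of $K_N$ with $r$ colours contains a monochromatic copy of $G$. $\chi(H)$ denotes the chromatic number of $H$. *)

From Stdlib Require Import ClassicalEpsilon.
From mathcomp Require Import all_boot.
Set Implicit Arguments. Unset Strict Implicit. Unset Printing Implicit Defensive.

Definition simple_graph (V : finType) (e : rel V) : Prop :=
  symmetric e /\ irreflexive e.

(* H (on VH, eH) is a subgraph of G (on VG, eG), up to isomorphism:
   an injective vertex map sending edges to edges *)
Definition subgraph_via (VH VG : finType) (eH : rel VH) (eG : rel VG)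
    (phi : VH -> VG) : Prop :=
  injective phi /\ forall u v, eH u v -> eG (phi u) (phi v).

Definition connected_graph (V : finType) (e : rel V) : Prop :=
  0 < #|V| /\ forall u v : V, connect e u v.

(* least natural number satisfying P (0 if none exists; used only for
   predicates known to be eventually satisfied) *)
Definition classical_min (P : pred nat) : nat :=
  match excluded_middle_informative (exists n, P n) with
  | left h => ex_minn h
  | right _ => 0
  end.

Definition k_colourable (V : finType) (e : rel V) (k : nat) : bool :=
  [exists f : {ffun V -> 'I_k}, [forall u, forall v, e u v ==> (f u != f v)]].

Definition chi (V : finType) (e : rel V) : nat := classical_min (k_colourable e).

(* every r-colouring of the edges of K_N (a colouring c of ordered pairs that
   is symmetric on pairs of distinct vertices; only those values matter)
   contains a monochromatic copy of G *)
Definition ramsey_prop (r : nat) (V : finType) (e : rel V) (N : nat) : bool :=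
  [forall c : {ffun 'I_N * 'I_N -> 'I_r},
     [forall x, forall y, (x != y) ==> (c (x, y) == c (y, x))] ==>
     [exists col : 'I_r, exists f : {ffun V -> 'I_N},
        injectiveb f && [forall u, forall v, e u v ==> (c (f u, f v) == col)]]].

Definition ramsey (r : nat) (V : finType) (e : rel V) : nat :=
  classical_min (ramsey_prop r e).

From Stdlib Require Import ClassicalEpsilon.
From mathcomp Require Import all_boot zify.
Set Implicit Arguments. Unset Strict Implicit. Unset Printing Implicit Defensive.

(* With K = chi(H) - 1 and M = R_2(H) - 1, split the vertices of K_(KM) into
   K blocks of size M, colour each block with two colours avoiding a
   monochromatic H, and give every edge between blocks a third colour. A
   monochromatic G contains a monochromatic H: in the third colour its block
   map properly K-colours H, and in one of the first two colours connectivity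
   traps it inside a single block. Since [ramsey] is a least element, R_3(G)
   must also be shown to exist, which is Ramsey's theorem. *)

Lemma classical_min_holds (P : pred nat) : (exists n, P n) -> P (classical_min P).
Proof.
rewrite /classical_min => ex; case: excluded_middle_informative => [h|//].
by case: ex_minnP.
Qed.

Lemma classical_min_gt (P : pred nat) n : n < classical_min P -> ~~ P n.
Proof.
rewrite /classical_min; case: excluded_middle_informative => [h|//].
case: ex_minnP => m _ min_m lt_nm; apply: contraTN lt_nm => Pn.
by rewrite -leqNgt min_m.
Qed.

Lemma classical_min_predn (P : pred nat) : ~~ P 0 -> ~~ P (classical_min P).-1.
Proof.
move=> nP0; have [-> //|min_gt0] := posnP (classical_min P).
by apply: classical_min_gt; rewrite prednK.
Qed.

Lemma leq_card_inj_into (V T : finType) (A : {pred T}) : #|V| <= #|A| ->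
  exists2 f : V -> T, injective f & forall x, f x \in A.
Proof.
move=> le_VA; exists (fun x => enum_val (widen_ord le_VA (enum_rank x))).
  by move=> x y /enum_val_inj /(congr1 val) /= /val_inj /enum_rank_inj.
by move=> x; apply: enum_valP.
Qed.

Lemma connect_constant (V : finType) (e : rel V) (T : eqType) (g : V -> T) :
  (forall u v, connect e u v) -> (forall u v, e u v -> g u = g v) ->
  forall u v, g u = g v.
Proof.
move=> conn_e g_e u v; pose a := [pred x | g x == g u].
have a_closed : closed e a by move=> x y /g_e; rewrite !inE => ->.
by have := closed_connect a_closed (conn_e u v); rewrite !inE eqxx => /esym/eqP.
Qed.

Lemma k_colourableP (V : finType) (e : rel V) k :
  reflect (exists f : V -> 'I_k, forall u v, e u v -> f u != f v)
          (k_colourable e k).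
Proof.
apply: (iffP existsP) => [[f /forallP f_proper]|[f f_proper]].
  by exists f => u v; move/forallP: (f_proper u) => /(_ v) /implyP.
exists [ffun u => f u]; apply/forallP => u; apply/forallP => v.
by apply/implyP; rewrite !ffunE; apply: f_proper.
Qed.

Lemma k_colourable0 (V : finType) (e : rel V) : 0 < #|V| -> ~~ k_colourable e 0.
Proof. by case/card_gt0P=> u _; apply/k_colourableP => -[f _]; case: (f u). Qed.

Definition ramsey_on (r : nat) (V : finType) (e : rel V) (T : finType) : Prop :=
  forall c : T -> T -> 'I_r, (forall x y, x != y -> c x y = c y x) ->
  exists col : 'I_r, exists2 f : V -> T,
    injective f & forall u v, e u v -> c (f u) (f v) = col.

Lemma ramsey_propP r (V : finType) (e : rel V) N :
  reflect (ramsey_on r e 'I_N) (ramsey_prop r e N).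
Proof.
apply: (iffP forallP) => [R c c_sym | R c].
  have [|col /existsP [f /andP [/injectiveP f_inj /forallP f_mono]]] :=
    elimT existsP (implyP (R [ffun p => c p.1 p.2]) _).
    apply/forallP => x; apply/forallP => y; apply/implyP => neq_xy.
    by rewrite !ffunE c_sym.
  exists col, f => // u v e_uv.
  by move/forallP: (f_mono u) => /(_ v) /implyP /(_ e_uv); rewrite ffunE => /eqP.
apply/implyP => /forallP c_sym.
have [|col [f f_inj f_mono]] := R (fun x y => c (x, y)).
  move=> x y neq_xy.
  by move/forallP: (c_sym x) => /(_ y) /implyP /(_ neq_xy) /eqP.
apply/existsP; exists col; apply/existsP; exists [ffun u => f u].
apply/andP; split; first by apply/injectiveP => x y; rewrite !ffunE => /f_inj.
apply/forallP => u; apply/forallP => v; apply/implyP => e_uv.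
by rewrite !ffunE f_mono.
Qed.

Lemma ramsey_prop0 r (V : finType) (e : rel V) :
  0 < r -> 0 < #|V| -> ~~ ramsey_prop r e 0.
Proof.
move=> r_gt0 /card_gt0P [u _]; apply/ramsey_propP => R.
by have [|_ [f _ _]] := R (fun _ _ => Ordinal r_gt0); last case: (f u).
Qed.

Lemma ramsey_on_inj r (V : finType) (e : rel V) (T T' : finType) (h : T -> T') :
  injective h -> ramsey_on r e T -> ramsey_on r e T'.
Proof.
move=> h_inj R c c_sym.
have [|col [f f_inj f_mono]] := R (fun x y => c (h x) (h y)).
  by move=> x y neq_xy; rewrite c_sym // (inj_eq h_inj).
by exists col, (h \o f) => //; apply: inj_comp.
Qed.

Lemma ramsey_on_leq_card r (V : finType) (e : rel V) (T T' : finType) :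
  #|T| <= #|T'| -> ramsey_on r e T -> ramsey_on r e T'.
Proof. by case/leq_card_inj_into => h h_inj _; apply: ramsey_on_inj h_inj. Qed.

Lemma ramsey_on_subgraph r (VH VG : finType) (eH : rel VH) (eG : rel VG) phi
    (T : finType) :
  subgraph_via eH eG phi -> ramsey_on r eG T -> ramsey_on r eH T.
Proof.
move=> [phi_inj phi_e] R c c_sym; have [col [f f_inj f_mono]] := R c c_sym.
by exists col, (f \o phi) => [|u v /phi_e /f_mono]; first exact: inj_comp.
Qed.

Section MonochromaticCliques.
Variables (T : finType) (r : nat) (c : T -> T -> 'I_r).
Hypothesis c_sym : forall x y, x != y -> c x y = c y x.
Hypothesis r_gt1 : 1 < r.

Definition monochromatic (A : {set T}) (j : 'I_r) :=
  {in A &, forall x y, x != y -> c x y = j}.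

Lemma monochromatic1 v j : monochromatic [set v] j.
Proof. by move=> x y /set1P -> /set1P ->; rewrite eqxx. Qed.

Lemma monochromaticU1 v (A : {set T}) j : {in A, forall y, c v y = j} ->
  monochromatic A j -> monochromatic (v |: A) j.
Proof.
move=> c_vA A_mono x y /setU1P [-> | xA] /setU1P [-> | yA] neq_xy.
- by rewrite eqxx in neq_xy.
- exact: c_vA.
- by rewrite c_sym ?c_vA // eq_sym.
- exact: A_mono.
Qed.

Lemma large_colour_class v (S : {set T}) m : v \in S -> r ^ m.+1 <= #|S| ->
  exists j, r ^ m <= #|[set y in S :\ v | c v y == j]|.
Proof.
move=> vS S_large; apply/existsP; apply: contraT => /existsPn small.
have split_S : #|S :\ v| = \sum_(j < r) #|[set y in S :\ v | c v y == j]|.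
  rewrite -sum1_card (partition_big (c v) predT) //=.
  by apply: eq_bigr => j _; rewrite -sum1_card; apply: eq_bigl => y; rewrite inE.
have : #|S :\ v| <= \sum_(j < r) (r ^ m).-1.
  rewrite split_S; apply: leq_sum => j _.
  by have := small j; rewrite -ltnNge; lia.
rewrite sum_nat_const card_ord; have := cardsD1 v S; rewrite vS.
by move: S_large; rewrite expnS; have := expn_gt0 r m; nia.
Qed.

(* The multicolour Erdős–Szekeres bound. *)
Lemma monochromatic_clique n (a : 'I_r -> nat) (S : {set T}) :
  \sum_i a i = n -> r ^ n <= #|S| ->
  exists j, exists2 A : {set T}, A \subset S & monochromatic A j /\ a j < #|A|.
Proof.
have singleton j v (b : 'I_r -> nat) (S' : {set T}) : v \in S' -> b j = 0 ->
    exists j, exists2 A : {set T}, A \subset S' & monochromatic A j /\ b j < #|A|.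
  move=> vS bj0; exists j, [set v]; rewrite ?sub1set //.
  by split; [apply: monochromatic1 | rewrite bj0 cards1].
elim: n a S => [|m IH] a S sum_a S_large; have [v vS] : exists v, v \in S.
- by apply/card_gt0P; rewrite expn0 in S_large.
- have j := Ordinal (ltnW r_gt1); apply: (singleton j v) => //.
  by apply/eqP; rewrite -leqn0 -sum_a (bigD1 j) //= leq_addr.
- by apply/card_gt0P; apply: leq_trans S_large; rewrite expn_gt0 ltnW.
have [j Sj_large] := large_colour_class vS S_large.
set Sj := [set y in S :\ v | c v y == j] in Sj_large.
have [aj0|aj_gt0] := posnP (a j); first exact: (singleton j v).
pose a' i := if i == j then (a i).-1 else a i.
have sum_a' : \sum_i a' i = m.
  rewrite (bigD1 j) //= /a' eqxx (eq_bigr a) => [|i /negPf -> //].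
  by move: sum_a; rewrite (bigD1 j) //=; lia.
have [j' [A sub_A_Sj [A_mono a'_lt]]] := IH a' Sj sum_a' Sj_large.
have sub_Sj_S : Sj \subset S.
  by apply/subsetP => y; rewrite !inE => /andP [/andP []].
have sub_A_S := subset_trans sub_A_Sj sub_Sj_S.
have [eq_j'j|neq_j'j] := eqVneq j' j; last first.
  by exists j', A => //; split; move: a'_lt; rewrite // /a' (negPf neq_j'j).
subst j'; exists j, (v |: A); first by rewrite subUset sub1set vS.
have vA : v \notin A by apply: contra (subsetP sub_A_Sj v) _; rewrite !inE eqxx.
split; last by move: a'_lt; rewrite cardsU1 vA /a' eqxx; lia.
apply: monochromaticU1 => // y /(subsetP sub_A_Sj).
by rewrite !inE => /andP [_ /eqP].
Qed.

End MonochromaticCliques.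

Lemma ramsey_on_large r (V : finType) (e : rel V) (T : finType) :
  1 < r -> irreflexive e -> r ^ (r * #|V|) <= #|T| -> ramsey_on r e T.
Proof.
move=> r_gt1 e_irr T_large c c_sym.
have [|j [A _ [A_mono V_lt_A]]] :=
  monochromatic_clique c_sym r_gt1 (a := fun=> #|V|) (S := [set: T]) erefl _.
  by rewrite sum_nat_const card_ord cardsT.
have [f f_inj fA] := leq_card_inj_into (ltnW V_lt_A).
exists j, f => // u v e_uv; apply: A_mono; rewrite ?fA ?(inj_eq f_inj) //.
by apply: contraTneq e_uv => ->; rewrite e_irr.
Qed.

Lemma ramsey_exists r (V : finType) (e : rel V) :
  1 < r -> irreflexive e -> exists N, ramsey_prop r e N.
Proof.
move=> r_gt1 e_irr; exists (r ^ (r * #|V|)); apply/ramsey_propP.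
by apply: ramsey_on_large; rewrite ?card_ord.
Qed.

Section BlockColouring.
Variables (K M : nat) (c0 : 'I_M -> 'I_M -> 'I_2).

Definition block_colouring (x y : 'I_K * 'I_M) : 'I_3 :=
  if x.1 == y.1 then widen_ord (leqnSn 2) (c0 x.2 y.2) else ord_max.

Lemma block_colouring_sym : (forall x y, x != y -> c0 x y = c0 y x) ->
  forall x y, x != y -> block_colouring x y = block_colouring y x.
Proof.
move=> c0_sym [k1 m1] [k2 m2] neq_xy.
rewrite /block_colouring /= [k2 == _]eq_sym.
have [eq_k|//] := eqVneq k1 k2; rewrite c0_sym //.
by apply: contra neq_xy => /eqP ->; rewrite eq_k.
Qed.

Lemma block_colouring_max x y :
  (block_colouring x y == ord_max) = (x.1 != y.1).
Proof.
rewrite /block_colouring; have [_|_] := eqVneq x.1 y.1; last by rewrite eqxx.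
by apply/negbTE; rewrite -val_eqE /= neq_ltn ltn_ord.
Qed.

End BlockColouring.

Lemma ramsey_on_blocks (V : finType) (e : rel V) K M :
  connected_graph e -> ~~ k_colourable e K ->
  ramsey_on 3 e ('I_K * 'I_M)%type -> ramsey_on 2 e 'I_M.
Proof.
move=> [_ conn_e] not_colourable R c0 c0_sym.
have [col [f f_inj f_mono]] := R _ (block_colouring_sym c0_sym).
have [col_max|col_lt_max] := eqVneq col ord_max.
  case/negP: not_colourable; apply/k_colourableP; exists (fun u => (f u).1).
  by move=> u v /f_mono; rewrite col_max => /eqP; rewrite block_colouring_max.
have col_lt2 : col < 2.
  by move: col_lt_max; rewrite -val_eqE /=; have := ltn_ord col; lia.
have same_block u v : e u v -> (f u).1 = (f v).1.
  move=> /f_mono f_col; apply/eqP; apply: contraNT col_lt_max.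
  by rewrite -f_col block_colouring_max.
have one_block := connect_constant conn_e same_block.
exists (Ordinal col_lt2), (fun u => (f u).2).
  move=> u v eq_2; apply: f_inj; apply/eqP.
  by rewrite -pair_eqE /= (one_block u v) eq_2 !eqxx.
move=> u v e_uv; apply: val_inj => /=.
by rewrite -(f_mono u v e_uv) /block_colouring (same_block u v e_uv) eqxx.
Qed.

Theorem lemma4p1 (VG VH : finType) (eG : rel VG) (eH : rel VH)
  (phi : VH -> VG) :
  simple_graph eG -> simple_graph eH ->
  subgraph_via eH eG phi -> connected_graph eH ->
  (chi eH - 1) * (ramsey 2 eH - 1) + 1 <= ramsey 3 eG.
Proof.
move=> [_ eG_irr] _ H_sub_G H_conn; have [VH_gt0 _] := H_conn.
set K := chi eH - 1; set M := ramsey 2 eH - 1.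
have not_colourable : ~~ k_colourable eH K.
  by rewrite /K subn1 classical_min_predn ?k_colourable0.
have not_ramsey2 : ~~ ramsey_prop 2 eH M.
  by rewrite /M subn1 classical_min_predn ?ramsey_prop0.
have ramsey3 : ramsey_prop 3 eG (ramsey 3 eG).
  exact: classical_min_holds (ramsey_exists (r := 3) isT eG_irr).
rewrite addn1 ltnNge; apply: contraL ramsey3 => le_R3.
apply/ramsey_propP => /(ramsey_on_leq_card (T' := 'I_K * 'I_M)%type) R3.
case/negP: not_ramsey2; apply/ramsey_propP.
apply: (ramsey_on_blocks H_conn not_colourable).
by apply: ramsey_on_subgraph H_sub_G (R3 _); rewrite card_prod !card_ord.
Qed.
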